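(* Assume the general-case standing hypotheses, let $\sigma\in(0,1)$, $\mu^+=\sigma\mu$, $C_1>0$. Then there exist $\rho>0$, $\bar\mu\in(0,\hat\mu]$ and $C>0$ such that for all $\mu\in(0,\bar\mu]$ and all $(x,\lambda)\in\mathcal B((x^*,\lambda^* ),\delta)$ with $l<x<u$, $\lambda^l,\lambda^u>0$, $\|(x,\lambda)-(x^\mu,\lambda^\mu)\|<\rho$, $\|F_\mu(x,\lambda)\|\le C_1\mu$, the direction $(\Delta x,\Delta\lambda^l,\Delta\lambda^u)$ below is well defined and $$\|(\Delta x,\Delta\lambda^l,\Delta\lambda^u)-(\Delta x^N,\Delta\lambda^{l,N},\Delta\lambda^{u,N})\|\le C\mu^2.$$ Construction (write $H=\nabla^2f(x)$): (i) for $i\in\mathcal A_x$, $\Delta x_i\in\{\Delta x_i^S,\Delta x_i^C\}$ (arbitrary per index). (ii) $\Delta x_{\mathcal I_x}=\Delta x^{ls}_{\mathcal I_x}$ is the solution of the linear system, for $i\in\mathcal I_x$, $$\sum_{j\in\mathcal I_x}H_{ij}\Delta x_j+\Big(\frac{\lambda^l_i}{x_i-l_i}+\frac{\lambda^u_i}{u_i-x_i}\Big)\Delta x_i=-[\nabla f(x)]_i-\sum_{j\in\mathcal A_x}H_{ij}\Delta x_j+\frac{\mu^+}{x_i-l_i}-\frac{\mu^+}{u_i-x_i}.$$ (iii) For $i\in\mathcal I_l$ set $\Delta\lambda^{l,ls}_i=-\lambda^l_i+\frac{\mu^+-\lambda^l_i\Delta x_i}{x_i-l_i}$, and for $i\in\mathcal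 I_u$ set $\Delta\lambda^{u,ls}_i=-\lambda^u_i+\frac{\mu^++\lambda^u_i\Delta x_i}{u_i-x_i}$; take $\Delta\lambda^l_i\in\{\Delta\lambda^{l,ls}_i,\Delta\lambda^{l,C}_i\}$ ($i\in\mathcal I_l$) and $\Delta\lambda^u_i\in\{\Delta\lambda^{u,ls}_i,\Delta\lambda^{u,C}_i\}$ ($i\in\mathcal I_u$). (iv) For $i\in\mathcal A_x$ let $r_i=[\nabla f(x)]_i-\lambda^l_i+\lambda^u_i+\sum_{j=1}^nH_{ij}\Delta x_j-[i\in\mathcal I_l]\Delta\lambda^{l,ls}_i+[i\in\mathcal I_u]\Delta\lambda^{u,ls}_i$. For $i\in\mathcal A_l$ take $\Delta\lambda^l_i\in\{\Delta\lambda^{l,b}_i,\Delta\lambda^{l,ls}_i\}$ with $\Delta\lambda^{l,b}_i=r_i$ and $\Delta\lambda^{l,ls}_i=\frac{r_i-(x_i-l_i)\big(\lambda^l_i(x_i-l_i)-\mu^++\lambda^l_i\Delta x_i\big)}{1+(x_i-l_i)^2}$; for $i\in\mathcal A_u$ take $\Delta\lambda^u_i\in\{\Delta\lambda^{u,b}_i,\Delta\lambda^{u,ls}_i\}$ with $\Delta\lambda^{u,b}_i=-r_i$ and $\Delta\lambda^{u,ls}_i=-\frac{r_i+(u_i-x_i)\big(\lambda^u_i(u_i-x_i)-\mu^+-\lambda^u_i\Delta x_i\big)}{1+(u_i-x_i)^2}$. Here $[\cdot]$ is 1 if the condition holds and 0 otherwise.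
   Context: General problem: minimize $f(x)$ subject to $l\le x\le u$, $l,u\in\mathbb R^n$, $l<u$, $f$ twice continuously differentiable with locally Lipschitz Hessian; multipliers $\lambda=(\lambda^l,\lambda^u)$. $F_\mu(x,\lambda)=\begin{bmatrix}\nabla f(x)-\lambda^l+\lambda^u\\ \Lambda^l(X-L)e-\mu e\\ \Lambda^u(U-X)e-\mu e\end{bmatrix}$ with $X,L,U,\Lambda^l,\Lambda^u$ the diagonal matrices of $x,l,u,\lambda^l,\lambda^u$ and $e$ all-ones; $F'(x,\lambda)=\begin{bmatrix}\nabla^2f(x)&-I&I\\ \Lambda^l&X-L&0\\ -\Lambda^u&0&U-X\end{bmatrix}$; the Newton direction solves $F'(x,\lambda)(\Delta x^N,\Delta\lambda^{l,N},\Delta\lambda^{u,N})=-F_{\mu^+}(x,\lambda)$. Euclidean norms. Partial approximations: $\Delta x_i^S=-\frac1{d_i}\big([\nabla f(x)]_i-\mu^+[\frac1{x_i-l_i}-\frac1{u_i-x_i}]\big)$ with $d_i=[\nabla^2f(x)]_{ii}+\frac{\lambda^l_i}{x_i-l_i}+\frac{\lambda^u_i}{u_i-x_i}$; $\Delta x^C_i=-(x_i-l_i)+\mu^+/\lambda^l_i$ for $i\in\mathcal A_l$, $\Delta x_i^C=(u_i-x_i)-\mu^+/\lambda^u_i$ for $i\in\mathcal A_u$; $\Delta\lambda^{l,C}_i=-\lambda^l_i+\mu^+/(x_i-l_i)$, $\Delta\lambda^{u,C}_i=-\lambda^u_i+\mu^+/(u_i-x_i)$. Sets: $\mathcal A_l=\{i:x^*_i=l_i\}$,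 $\mathcal A_u=\{i:x^*_i=u_i\}$, $\mathcal I_l,\mathcal I_u$ complements, $\mathcal A_x=\mathcal A_l\cup\mathcal A_u$, $\mathcal I_x$ its complement. Standing hypotheses: $\nabla f(x^* )-\lambda^{l*}+\lambda^{u*}=0$, $l\le x^*\le u$, $\lambda^{l*},\lambda^{u*}\ge0$, $(x^*-l)_i\lambda^{l*}_i=0$, $(u-x^* )_i\lambda^{u*}_i=0$, $(x^*-l)+\lambda^{l*}>0$, $(u-x^* )+\lambda^{u*}>0$, $[\nabla^2f(x^* )]_{\mathcal I_x\mathcal I_x}\succ0$; $\delta>0$ with $F'$ nonsingular and boundedly invertible on $\mathcal B((x^*,\lambda^* ),\delta)$; $\hat\mu>0$ with a Lipschitz barrier trajectory $(x^\mu,\lambda^\mu)\in\mathcal B((x^*,\lambda^* ),\delta)$, $F_\mu(x^\mu,\lambda^\mu)=0$, $\|(x^\mu,\lambda^\mu)-(x^*,\lambda^* )\|\le C_4\mu$ for $\mu\in(0,\hat\mu]$. *)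

From HB Require Import structures.
From mathcomp Require Import all_boot all_order all_algebra.
From mathcomp Require Import all_classical all_reals all_analysis.
Set Implicit Arguments. Unset Strict Implicit. Unset Printing Implicit Defensive.
Import Order.TTheory GRing.Theory Num.Theory.
Import numFieldNormedType.Exports.
Local Open Scope ring_scope.

Section Defs.
Variable R : realType.

Definition enorm m (v : 'cV[R]_m) : R := Num.sqrt (\sum_(i < m) v i 0 ^+ 2).

(* stacking (x, lambda^l, lambda^u) into one vector of R^{3n} *)
Definition stack3 n (a b c : 'cV[R]_n) : 'cV[R]_(n + n + n) := col_mx (col_mx a b) c.

Definition ei n (i : 'I_n) : 'cV[R]_n := delta_mx i 0.

Definition gradf n (f : 'cV[R]_n -> R) (x : 'cV[R]_n) : 'cV[R]_n :=
  \col_i derive f x (ei i).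
Definition hessf n (f : 'cV[R]_n -> R) (x : 'cV[R]_n) : 'M[R]_n :=
  \matrix_(i, j) derive (fun y => gradf f y i 0) x (ei j).

Definition frob n (A : 'M[R]_n) : R := Num.sqrt (\sum_(i < n) \sum_(j < n) A i j ^+ 2).

(* f is twice continuously differentiable with locally Lipschitz Hessian:
   all first and second partial derivatives exist and the Hessian is
   locally Lipschitz (hence continuous, hence f is C^2). *)
Definition C2_loclipHess n (f : 'cV[R]_n -> R) : Prop :=
  (forall x i, derivable f x (ei i)) /\
  (forall x i j, derivable (fun y => gradf f y i 0) x (ei j)) /\
  (forall x, exists r, 0 < r /\ exists L, forall y z,
      enorm (y - x) < r -> enorm (z - x) < r ->
      frob (hessf f y - hessf f z) <= L * enorm (y - z)).

Definition Fmu n (f : 'cV[R]_n -> R) (l u : 'cV[R]_n) (mu : R)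
    (x ll lu : 'cV[R]_n) : 'cV[R]_(n + n + n) :=
  stack3 (gradf f x - ll + lu)
         (\col_i (ll i 0 * (x i 0 - l i 0) - mu))
         (\col_i (lu i 0 * (u i 0 - x i 0) - mu)).

Definition Fprime n (f : 'cV[R]_n -> R) (l u : 'cV[R]_n)
    (x ll lu : 'cV[R]_n) : 'M[R]_(n + n + n) :=
  block_mx
    (block_mx (hessf f x) (- 1%:M) (diag_mx ll^T) (diag_mx (x - l)^T))
    (col_mx 1%:M 0)
    (row_mx (- diag_mx lu^T) 0)
    (diag_mx (u - x)^T).

Definition newton n (f : 'cV[R]_n -> R) (l u : 'cV[R]_n) (mup : R)
    (x ll lu : 'cV[R]_n) : 'cV[R]_(n + n + n) :=
  invmx (Fprime f l u x ll lu) *m (- Fmu f l u mup x ll lu).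

Definition inAl n (xs l : 'cV[R]_n) (i : 'I_n) : bool := xs i 0 == l i 0.
Definition inAu n (xs u : 'cV[R]_n) (i : 'I_n) : bool := xs i 0 == u i 0.
Definition inAx n (xs l u : 'cV[R]_n) (i : 'I_n) : bool := inAl xs l i || inAu xs u i.

Section Direction.
Variables (n : nat) (g : 'cV[R]_n) (H : 'M[R]_n) (l u xs x ll lu : 'cV[R]_n) (mup : R).

Definition dcoef (i : 'I_n) : R :=
  H i i + ll i 0 / (x i 0 - l i 0) + lu i 0 / (u i 0 - x i 0).

Definition dxS (i : 'I_n) : R :=
  - (dcoef i)^-1 * (g i 0 - mup * ((x i 0 - l i 0)^-1 - (u i 0 - x i 0)^-1)).

Definition dxC (i : 'I_n) : R :=
  if inAl xs l i then - (x i 0 - l i 0) + mup / ll i 0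
  else (u i 0 - x i 0) - mup / lu i 0.

Definition dllC (i : 'I_n) : R := - ll i 0 + mup / (x i 0 - l i 0).
Definition dluC (i : 'I_n) : R := - lu i 0 + mup / (u i 0 - x i 0).

Definition is_dx (cx : 'I_n -> bool) (dx : 'cV[R]_n) : Prop :=
  (forall i, inAx xs l u i -> dx i 0 = if cx i then dxS i else dxC i) /\
  (forall i, ~~ inAx xs l u i ->
     \sum_(j < n | ~~ inAx xs l u j) H i j * dx j 0
       + (ll i 0 / (x i 0 - l i 0) + lu i 0 / (u i 0 - x i 0)) * dx i 0
     = - g i 0 - \sum_(j < n | inAx xs l u j) H i j * dx j 0
       + mup / (x i 0 - l i 0) - mup / (u i 0 - x i 0)).

Definition dllI (dx : 'cV[R]_n) (i : 'I_n) : R :=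
  - ll i 0 + (mup - ll i 0 * dx i 0) / (x i 0 - l i 0).
Definition dluI (dx : 'cV[R]_n) (i : 'I_n) : R :=
  - lu i 0 + (mup + lu i 0 * dx i 0) / (u i 0 - x i 0).

Definition rres (dx : 'cV[R]_n) (i : 'I_n) : R :=
  g i 0 - ll i 0 + lu i 0 + \sum_(j < n) H i j * dx j 0
  - (if ~~ inAl xs l i then dllI dx i else 0)
  + (if ~~ inAu xs u i then dluI dx i else 0).

Definition dllA (dx : 'cV[R]_n) (i : 'I_n) : R :=
  (rres dx i - (x i 0 - l i 0) * (ll i 0 * (x i 0 - l i 0) - mup + ll i 0 * dx i 0))
  / (1 + (x i 0 - l i 0) ^+ 2).
Definition dluA (dx : 'cV[R]_n) (i : 'I_n) : R :=
  - ((rres dx i + (u i 0 - x i 0) * (lu i 0 * (u i 0 - x i 0) - mup - lu i 0 * dx i 0))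
     / (1 + (u i 0 - x i 0) ^+ 2)).

(* Delta lambda^l, Delta lambda^u given the choices:
   cl i / cu i = true selects the "ls" variant; false selects the C variant
   (on I_l / I_u) or the "b" variant (on A_l / A_u). *)
Definition dll (cl : 'I_n -> bool) (dx : 'cV[R]_n) : 'cV[R]_n :=
  \col_i (if inAl xs l i then (if cl i then dllA dx i else rres dx i)
          else (if cl i then dllI dx i else dllC i)).
Definition dlu (cu : 'I_n -> bool) (dx : 'cV[R]_n) : 'cV[R]_n :=
  \col_i (if inAu xs u i then (if cu i then dluA dx i else - rres dx i)
          else (if cu i then dluI dx i else dluC i)).
End Direction.

End Defs.

From HB Require Import structures.
From mathcomp Require Import all_boot all_order all_algebra.
From mathcomp Require Import all_classical all_reals all_analysis.
From mathcomp Require Import ring lra.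
Import Order.TTheory GRing.Theory Num.Theory.
Import numFieldNormedType.Exports.
Set Implicit Arguments. Unset Strict Implicit. Unset Printing Implicit Defensive.
Local Open Scope ring_scope.

(* Write a_i = x_i - l_i and b_i = u_i - x_i.  At a point (x, lambda) close to
   (x^mu, lambda^mu) with F_mu(x, lambda) = O(mu), strict complementarity gives a
   margin eta separating the scales of every bound: on A_l the multiplier is
   >= eta while a_i = O(mu), on I_l the converse, and symmetrically for u.  The Newton direction N is O(mu)
   because F' has a uniformly bounded inverse.

   The core of the argument is the reduced system of step (ii): the operator
   y |-> (H y + D y) on I_x, with y vanishing on A_x, is uniformly invertible
   ([reduced_system_bound]).  Indeed a solution y can be lifted to R^{3n}
   ([reduced_lift]) so that F' applied to the lift equals the right-hand side up
   to terms carrying a factor a_i or b_i = O(mu) on the active sets.  This gives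
   existence and uniqueness of Delta x, and propagates O(mu^2) errors.

   Eliminating the multiplier rows of the Newton system shows that Delta x^N
   satisfies the same reduced equations.  On A_x both choices Delta x^S and
   Delta x^C are O(mu^2)-close to Delta x^N ([dxS_error], [dxC_error]); the
   reduced system transfers this to all of Delta x ([dx_error]); every multiplier
   formula is an explicit expression in Delta x - Delta x^N and Delta x^N with an
   O(mu) factor in front ([dll_error], [dlu_error]). *)

Section VectorNorms.
Variable R : realType.

Lemma normr_le_sum m (F : 'I_m -> R) (k : 'I_m) : `|F k| <= \sum_i `|F i|.
Proof. by rewrite (bigD1 k) //= lerDl sumr_ge0. Qed.

Lemma sum_le_card m (F : 'I_m -> R) (c : R) :
  (forall i, F i <= c) -> \sum_i F i <= m%:R * c.
Proof.
move=> hF; apply: le_trans (ler_sum _ (fun i _ => hF i)) _.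
by rewrite sumr_const card_ord mulr_natl.
Qed.

Lemma enorm_ge0 m (v : 'cV[R]_m) : 0 <= enorm v.
Proof. exact: sqrtr_ge0. Qed.

Lemma enormN m (v : 'cV[R]_m) : enorm (- v) = enorm v.
Proof. by rewrite /enorm; congr Num.sqrt; apply: eq_bigr => i _; rewrite mxE sqrrN. Qed.

Lemma coord_le_enorm m (v : 'cV[R]_m) k : `|v k 0| <= enorm v.
Proof.
rewrite /enorm -sqrtr_sqr ler_sqrt ?sumr_ge0 // => [|i _]; last exact: sqr_ge0.
by rewrite (bigD1 k) //= lerDl sumr_ge0 // => i _; exact: sqr_ge0.
Qed.

Lemma enorm_le_sum m (v : 'cV[R]_m) : enorm v <= \sum_i `|v i 0|.
Proof.
have S0 : 0 <= \sum_i `|v i 0| by exact: sumr_ge0.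
rewrite /enorm -(ger0_norm S0) -sqrtr_sqr ler_sqrt ?exprn_ge0 //.
rewrite expr2 mulr_suml; apply: ler_sum => i _.
rewrite -[v i 0 ^+ 2]ger0_norm ?sqr_ge0 // expr2 normrM ler_wpM2l ?normr_ge0 //.
exact: (normr_le_sum (fun j => v j 0)).
Qed.

Lemma mxB_entry m p (A B : 'M[R]_(m, p)) i j : (A - B) i j = A i j - B i j.
Proof. by rewrite !mxE. Qed.

Lemma entry_le_frob n (A : 'M[R]_n) i j : `|A i j| <= frob A.
Proof.
have sq0 (k k' : 'I_n) : 0 <= A k k' ^+ 2 by exact: sqr_ge0.
rewrite /frob -sqrtr_sqr ler_sqrt ?sumr_ge0 // => [|k _]; last exact: sumr_ge0.
rewrite (bigD1 i) //= (bigD1 j) //= -addrA lerDl.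
by rewrite addr_ge0 ?sumr_ge0 // => k _; rewrite ?sumr_ge0.
Qed.

Lemma mulmx_entry_bound n (H : 'M[R]_n) (y : 'cV[R]_n) (M : R) i :
  (forall i j, `|H i j| <= M) -> `|(H *m y) i 0| <= M * \sum_j `|y j 0|.
Proof.
move=> hH; rewrite mxE; apply: le_trans (ler_norm_sum _ _ _) _.
rewrite mulr_sumr; apply: ler_sum => j _; rewrite normrM.
by apply: ler_wpM2r => //; exact: normr_ge0.
Qed.

End VectorNorms.

Section Stack3.
Variables (R : realType) (n : nat).
Implicit Types (a b c : 'cV[R]_n).

Lemma stack3E1 a b c i : stack3 a b c (lshift n (lshift n i)) 0 = a i 0.
Proof. by rewrite /stack3 !col_mxEu. Qed.
Lemma stack3E2 a b c i : stack3 a b c (lshift n (rshift n i)) 0 = b i 0.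
Proof. by rewrite /stack3 col_mxEu col_mxEd. Qed.
Lemma stack3E3 a b c i : stack3 a b c (rshift (n + n) i) 0 = c i 0.
Proof. by rewrite /stack3 col_mxEd. Qed.

Lemma stack3_coord_le a b c i :
  [/\ `|a i 0| <= enorm (stack3 a b c), `|b i 0| <= enorm (stack3 a b c)
    & `|c i 0| <= enorm (stack3 a b c)].
Proof. by rewrite -(stack3E1 a b c) -(stack3E2 a b c) -(stack3E3 a b c) !coord_le_enorm. Qed.

Lemma enorm_stack3_le a b c :
  enorm (stack3 a b c) <= \sum_i `|a i 0| + \sum_i `|b i 0| + \sum_i `|c i 0|.
Proof.
apply: le_trans (enorm_le_sum _) _.
rewrite /stack3 big_split_ord /= big_split_ord /= le_eqVlt; apply/orP; left.
by apply/eqP; congr (_ + _ + _); apply: eq_bigr => i _; rewrite ?col_mxEu ?col_mxEd.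
Qed.

Lemma stack3B a b c a' b' c' :
  stack3 a b c - stack3 a' b' c' = stack3 (a - a') (b - b') (c - c').
Proof. by rewrite /stack3 opp_col_mx add_col_mx opp_col_mx add_col_mx. Qed.

Lemma stack3N a b c : - stack3 a b c = stack3 (- a) (- b) (- c).
Proof. by rewrite /stack3 !opp_col_mx. Qed.

Lemma stack3_blocks (v : 'cV[R]_(n + n + n)) :
  v = stack3 (usubmx (usubmx v)) (dsubmx (usubmx v)) (dsubmx v).
Proof. by rewrite /stack3 !vsubmxK. Qed.

Lemma stack3_inj a b c a' b' c' :
  stack3 a b c = stack3 a' b' c' -> [/\ a = a', b = b' & c = c'].
Proof. by move=> /eq_col_mx [/eq_col_mx [-> ->] ->]. Qed.

Lemma Fprime_mul (f : 'cV[R]_n -> R) (l u x ll lu p q r : 'cV[R]_n) :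
  Fprime f l u x ll lu *m stack3 p q r =
  stack3 (hessf f x *m p - q + r)
    (\col_i (ll i 0 * p i 0 + (x i 0 - l i 0) * q i 0))
    (\col_i (- (lu i 0 * p i 0) + (u i 0 - x i 0) * r i 0)).
Proof.
rewrite /Fprime /stack3 mul_block_col mul_block_col mul_col_mx mul_row_col.
rewrite mul0mx mul1mx mulNmx mul1mx add_col_mx addr0 mul0mx addr0.
congr col_mx; first congr col_mx.
- by rewrite !mul_diag_mx; apply/matrixP => i j; rewrite !mxE ord1.
- by rewrite mulNmx !mul_diag_mx; apply/matrixP => i j; rewrite !mxE ord1.
Qed.

End Stack3.

Section ScalarBounds.
Variable R : realType.

Lemma div_bound (p q P e : R) : 0 < e -> e <= q -> `|p| <= P -> `|p / q| <= P / e.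
Proof.
move=> e0 eq pP; have q0 : 0 < q by apply: lt_le_trans eq.
have P0 : 0 <= P by apply: le_trans pP.
rewrite normrM normfV (gtr0_norm q0).
apply: le_trans (_ : P / q <= _); first by rewrite ler_pM2r ?invr_gt0.
by apply: ler_wpM2l => //; rewrite lef_pV2 ?posrE.
Qed.

Lemma prod_bound (c d C D : R) : 0 <= c -> c <= C -> `|d| <= D -> `|c * d| <= C * D.
Proof.
move=> c0 cC dD; rewrite normrM (ger0_norm c0); apply: ler_pM => //; exact: normr_ge0.
Qed.

Lemma ratio_lb (p q e A : R) : 0 < e -> e <= p -> 0 < q -> q <= A -> e / A <= p / q.
Proof.
move=> e0 ep q0 qA; have A0 : 0 < A by apply: lt_le_trans qA.
apply: le_trans (_ : e / q <= _).
  by apply: ler_wpM2l; [exact: ltW|rewrite lef_pV2 ?posrE].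
by apply: ler_wpM2r => //; rewrite invr_ge0 ltW.
Qed.

End ScalarBounds.

Section ReducedForm.
Variables (R : realType) (n : nat) (g : 'cV[R]_n) (H : 'M[R]_n).
Variables (l u xs x ll lu : 'cV[R]_n) (s : R) (cx : 'I_n -> bool).
Local Notation Ax i := (inAx xs l u i).
Local Notation D i := (ll i 0 / (x i 0 - l i 0) + lu i 0 / (u i 0 - x i 0)).

Lemma is_dx_reducedP (dx : 'cV[R]_n) :
  is_dx g H l u xs x ll lu s cx dx <->
  (forall i, Ax i -> dx i 0 = if cx i then dxS g H l u x ll lu s i
                              else dxC l u xs x ll lu s i) /\
  (forall i, ~~ Ax i -> (H *m dx) i 0 + D i * dx i 0
     = - g i 0 + s / (x i 0 - l i 0) - s / (u i 0 - x i 0)).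
Proof.
have splitA i : (H *m dx) i 0 = \sum_(j | Ax j) H i j * dx j 0
                                + \sum_(j | ~~ Ax j) H i j * dx j 0.
  by rewrite mxE (bigID (fun j => Ax j)).
split=> -[hA hI]; split=> // i hi; have := hI i hi; rewrite splitA; lra.
Qed.

End ReducedForm.

Section ReducedSystem.
(* The operator y |-> ((H y)_i + D_i y_i)_{i in I_x}, acting on vectors vanishing
   on A_x, is uniformly invertible: a solution y of it is lifted to a vector w of
   R^{3n} whose image under F' is controlled by the right-hand side up to terms
   carrying the small active distances a_i (i in A_l) and b_i (i in A_u). *)
Variables (R : realType) (n : nat) (f : 'cV[R]_n -> R) (l u xs x ll lu : 'cV[R]_n).
Variables (K M eps : R).
Local Notation H := (hessf f x).
Local Notation a i := (x i 0 - l i 0).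
Local Notation b i := (u i 0 - x i 0).
Local Notation Al i := (inAl xs l i).
Local Notation Au i := (inAu xs u i).
Local Notation Ax i := (inAx xs l u i).
Local Notation Fp := (Fprime f l u x ll lu).
Local Notation D i := (ll i 0 / a i + lu i 0 / b i).

Hypothesis Fp_unit : Fp \in unitmx.
Hypothesis Fp_inv_bound : forall v, enorm (invmx Fp *m v) <= K * enorm v.
Hypothesis K_ge0 : 0 <= K.
Hypothesis hess_bound : forall i j, `|H i j| <= M.
Hypothesis M_ge0 : 0 <= M.
Hypothesis a_gt0 : forall i, 0 < a i.
Hypothesis b_gt0 : forall i, 0 < b i.
Hypothesis eps_ge0 : 0 <= eps.
Hypothesis Al_small : forall i, Al i -> a i <= eps.
Hypothesis Au_small : forall i, Au i -> b i <= eps.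
Hypothesis A_disjoint : forall i, Al i -> ~~ Au i.
Hypothesis eps_small : 4 * n%:R ^+ 2 * K * M * eps <= 1.

(* The lift of y: on A_l (resp. A_u) the multiplier block absorbs (H y)_i,
   elsewhere it cancels the diagonal contribution of y. *)
Definition reduced_lift (y : 'cV[R]_n) : 'cV[R]_(n + n + n) :=
  stack3 y (\col_i (if Al i then (H *m y) i 0 else - (ll i 0 * y i 0 / a i)))
           (\col_i (if Au i then - (H *m y) i 0 else lu i 0 * y i 0 / b i)).

Lemma reduced_lift_residual (y : 'cV[R]_n) (h : 'I_n -> R) :
  (forall i, Ax i -> y i 0 = 0) ->
  (forall i, ~~ Ax i -> (H *m y) i 0 + D i * y i 0 = h i) ->
  enorm (Fp *m reduced_lift y) <= \sum_i `|h i|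
    + n%:R * (eps * (M * \sum_i `|y i 0|)) + n%:R * (eps * (M * \sum_i `|y i 0|)).
Proof.
move=> hy0 hyI; set T := \sum_i `|y i 0|.
have T0 : 0 <= T by exact: sumr_ge0.
have MT0 : 0 <= eps * (M * T) by rewrite !mulr_ge0.
have hHy i : `|(H *m y) i 0| <= M * T by exact: mulmx_entry_bound.
have a0 i : a i != 0 by rewrite gt_eqF.
have b0 i : b i != 0 by rewrite gt_eqF.
rewrite /reduced_lift Fprime_mul; apply: le_trans (enorm_stack3_le _ _ _) _.
apply: lerD; first apply: lerD.
- apply: ler_sum => i _; rewrite !mxE.
  have [hAx|hIx] := boolP (Ax i).
    apply: le_trans (normr_ge0 (h i)); rewrite normr_le0; apply/eqP.
    rewrite hy0 // !mulr0 !mul0r ?oppr0.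
    move: hAx; rewrite /inAx; case/orP => hA.
      by rewrite hA (negPf (A_disjoint hA)); ring.
    case hA' : (Al i); first by rewrite (negPf (A_disjoint hA')) in hA.
    by rewrite hA; ring.
  move: (hIx); rewrite /inAx negb_or => /andP [hA1 hA2].
  rewrite (negPf hA1) (negPf hA2) -(hyI i hIx) opprK [(H *m y) i 0]mxE.
  by rewrite le_eqVlt; apply/orP; left; apply/eqP; congr `|_|; ring.
- apply: sum_le_card => i; rewrite !mxE.
  case hA : (Al i); last first.
    by rewrite (_ : _ + _ = 0) ?normr0 //; field.
  rewrite hy0 ?mulr0 ?add0r /inAx ?hA //.
  apply: prod_bound; [exact: ltW|exact: Al_small|by have := hHy i; rewrite mxE].
- apply: sum_le_card => i; rewrite !mxE.
  case hA : (Au i); last first.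
    by rewrite (_ : _ + _ = 0) ?normr0 //; field.
  rewrite hy0 ?mulr0 ?oppr0 ?add0r /inAx ?hA ?orbT // mulrN normrN.
  apply: prod_bound; [exact: ltW|exact: Au_small|by have := hHy i; rewrite mxE].
Qed.

Lemma reduced_system_bound (y : 'cV[R]_n) (h : 'I_n -> R) :
  (forall i, Ax i -> y i 0 = 0) ->
  (forall i, ~~ Ax i -> (H *m y) i 0 + D i * y i 0 = h i) ->
  \sum_i `|y i 0| <= 2 * n%:R * K * \sum_i `|h i|.
Proof.
move=> hy0 hyI; set T := \sum_i `|y i 0|; set S := \sum_i `|h i|.
have S0 : 0 <= S by exact: sumr_ge0.
have T0 : 0 <= T by exact: sumr_ge0.
have lift_back : enorm (reduced_lift y) <= K * enorm (Fp *m reduced_lift y).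
  by rewrite -{1}(mulKmx Fp_unit (reduced_lift y)); exact: Fp_inv_bound.
have T_le : T <= n%:R * enorm (reduced_lift y).
  by apply: sum_le_card => i; case: (stack3_coord_le y
    (\col_i (if Al i then (H *m y) i 0 else - (ll i 0 * y i 0 / a i)))
    (\col_i (if Au i then - (H *m y) i 0 else lu i 0 * y i 0 / b i)) i).
have key : T <= n%:R * K * S + (2 * n%:R ^+ 2 * K * M * eps) * T.
  apply: le_trans T_le _.
  apply: le_trans (ler_wpM2l (ler0n _ _) (le_trans lift_back
    (ler_wpM2l K_ge0 (reduced_lift_residual hy0 hyI)))) _.
  by rewrite -/S -/T le_eqVlt; apply/orP; left; apply/eqP; ring.
have : (2 * n%:R ^+ 2 * K * M * eps) * T <= 2^-1 * T.
  apply: ler_wpM2r => //; rewrite -[2^-1]mulr1.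
  have -> : 2 * n%:R ^+ 2 * K * M * eps = 2^-1 * (4 * n%:R ^+ 2 * K * M * eps) by field.
  by rewrite ler_wpM2l // invr_ge0.
lra.
Qed.

Lemma reduced_solution_zero (y : 'cV[R]_n) :
  (forall i, Ax i -> y i 0 = 0) ->
  (forall i, ~~ Ax i -> (H *m y) i 0 + D i * y i 0 = 0) -> y = 0.
Proof.
move=> hy0 hyI; have := reduced_system_bound hy0 (h := fun _ => 0) hyI.
rewrite [X in _ <= _ * X]big1 => [|k _]; last exact: normr0.
rewrite mulr0 => hs.
apply/matrixP => i j; rewrite ord1 mxE; apply/eqP; rewrite -normr_le0.
exact: le_trans (normr_le_sum (fun j => y j 0) i) hs.
Qed.

Lemma reduced_system_solvable (v h : 'I_n -> R) :
  exists y : 'cV[R]_n, (forall i, Ax i -> y i 0 = v i) /\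
                       (forall i, ~~ Ax i -> (H *m y) i 0 + D i * y i 0 = h i).
Proof.
pose N : 'M[R]_n := \matrix_(i, j) (if Ax i then (i == j)%:R else H i j + (i == j)%:R * D i).
have sum_delta (F : 'I_n -> R) i : \sum_j (i == j)%:R * F j = F i.
  rewrite (bigD1 i) //= eqxx mul1r big1 ?addr0 // => j hj.
  by rewrite eq_sym (negPf hj) mul0r.
have NE (w : 'cV[R]_n) i :
    (N *m w) i 0 = if Ax i then w i 0 else (H *m w) i 0 + D i * w i 0.
  rewrite mxE; case: (boolP (Ax i)) => hi.
    by under eq_bigr => j _ do rewrite mxE hi; exact: sum_delta.
  under eq_bigr => j _ do rewrite mxE (negPf hi) mulrDl.
  rewrite big_split /= [(H *m w) i 0]mxE; congr (_ + _).
  by under eq_bigr => j _ do rewrite mulrAC; rewrite -mulr_suml sum_delta mulrC.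
have N_unit : N \in unitmx.
  rewrite -unitmx_tr -row_free_unit; apply: inj_row_free => w hw.
  have hNw : N *m w^T = 0 by rewrite -[N *m _]trmxK trmx_mul trmxK hw trmx0.
  have hcoord i : (N *m w^T) i 0 = 0 by rewrite hNw mxE.
  have : w^T = 0.
    apply: reduced_solution_zero => i hi; have := hcoord i; rewrite NE.
      by rewrite hi.
    by rewrite (negPf hi).
  by move/(congr1 trmx); rewrite trmxK trmx0.
pose rhs : 'cV[R]_n := \col_i (if Ax i then v i else h i).
exists (invmx N *m rhs).
have hsol i : (N *m (invmx N *m rhs)) i 0 = rhs i 0 by rewrite mulKVmx.
by split=> i hi; have := hsol i; rewrite NE [rhs i 0]mxE ?hi ?(negPf hi).
Qed.

End ReducedSystem.

Record local_regime (R : realType) (n : nat) (f : 'cV[R]_n -> R)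
    (l u xs x ll lu : 'cV[R]_n) (K M eta Am C1 mu : R) : Prop := LocalRegime {
  reg_unit : Fprime f l u x ll lu \in unitmx;
  reg_inv : forall v, enorm (invmx (Fprime f l u x ll lu) *m v) <= K * enorm v;
  reg_hess : forall i j, `|hessf f x i j| <= M;
  reg_interior : forall i, 0 < x i 0 - l i 0 /\ 0 < u i 0 - x i 0;
  reg_mult : forall i, 0 < ll i 0 /\ 0 < lu i 0;
  reg_centred : forall i, ll i 0 * (x i 0 - l i 0) <= (1 + C1) * mu /\
                          lu i 0 * (u i 0 - x i 0) <= (1 + C1) * mu;
  reg_lower : forall i, if inAl xs l i then eta <= ll i 0 /\ x i 0 - l i 0 <= Am * mu
                        else eta <= x i 0 - l i 0 /\ ll i 0 <= Am * mu;
  reg_upper : forall i, if inAu xs u i then eta <= lu i 0 /\ u i 0 - x i 0 <= Am * mu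
                        else eta <= u i 0 - x i 0 /\ lu i 0 <= Am * mu;
  reg_disjoint : forall i, inAl xs l i -> ~~ inAu xs u i;
  reg_mu : 0 < mu <= 1;
  reg_small : 4 * n%:R ^+ 2 * K * M * (Am * mu) <= 1 /\ 2 * (Am * mu) * M <= eta
}.

Section NewtonComparison.
Variables (R : realType) (n : nat) (f : 'cV[R]_n -> R) (l u xs x ll lu : 'cV[R]_n).
Variables (K M eta Am C1 mu s B : R).
Hypothesis reg : local_regime f l u xs x ll lu K M eta Am C1 mu.
Hypotheses (K_ge0 : 0 <= K) (M_ge0 : 0 <= M) (eta_gt0 : 0 < eta).
Hypotheses (Am_gt0 : 0 < Am) (C1_gt0 : 0 < C1) (B_ge0 : 0 <= B).
Local Notation H := (hessf f x).
Local Notation g := (gradf f x).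
Local Notation a i := (x i 0 - l i 0).
Local Notation b i := (u i 0 - x i 0).
Local Notation Al i := (inAl xs l i).
Local Notation Au i := (inAu xs u i).
Local Notation Ax i := (inAx xs l u i).
Local Notation D i := (ll i 0 / a i + lu i 0 / b i).
Local Notation N := (newton f l u s x ll lu).
Local Notation dxN := (usubmx (usubmx N)).
Local Notation dlN := (dsubmx (usubmx N)).
Local Notation duN := (dsubmx N).
Hypothesis newton_small : enorm N <= B * mu.

Let mu_gt0 : 0 < mu. Proof. by case/andP: (reg_mu reg). Qed.
Let mu_le1 : mu <= 1. Proof. by case/andP: (reg_mu reg). Qed.
Let a_gt0 i : 0 < a i. Proof. exact: (reg_interior reg i).1. Qed.
Let b_gt0 i : 0 < b i. Proof. exact: (reg_interior reg i).2. Qed.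
Let ll_gt0 i : 0 < ll i 0. Proof. exact: (reg_mult reg i).1. Qed.
Let lu_gt0 i : 0 < lu i 0. Proof. exact: (reg_mult reg i).2. Qed.
Let a_neq0 i : a i != 0. Proof. by rewrite gt_eqF. Qed.
Let b_neq0 i : b i != 0. Proof. by rewrite gt_eqF. Qed.
Let ll_neq0 i : ll i 0 != 0. Proof. by rewrite gt_eqF. Qed.
Let lu_neq0 i : lu i 0 != 0. Proof. by rewrite gt_eqF. Qed.
Let Amu_gt0 : 0 < Am * mu. Proof. by rewrite mulr_gt0. Qed.
Let mu2_ge0 : 0 <= mu ^+ 2. Proof. exact: sqr_ge0. Qed.

Local Ltac nonzero := rewrite ?a_neq0 ?b_neq0 ?ll_neq0 ?lu_neq0 ?gt_eqF ?andbT //.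

Let newton_blocks : N = stack3 dxN dlN duN. Proof. exact: stack3_blocks. Qed.

Let dxN_bound i : `|dxN i 0| <= B * mu.
Proof. by case: (stack3_coord_le dxN dlN duN i) => h _ _; rewrite (le_trans h) -?newton_blocks. Qed.

Let dlN_bound i : `|dlN i 0| <= B * mu.
Proof. by case: (stack3_coord_le dxN dlN duN i) => _ h _; rewrite (le_trans h) -?newton_blocks. Qed.

Let duN_bound i : `|duN i 0| <= B * mu.
Proof. by case: (stack3_coord_le dxN dlN duN i) => _ _ h; rewrite (le_trans h) -?newton_blocks. Qed.

Lemma newton_eqs i :
  [/\ (H *m dxN) i 0 - dlN i 0 + duN i 0 = - (g i 0 - ll i 0 + lu i 0),
      ll i 0 * dxN i 0 + a i * dlN i 0 = - (ll i 0 * a i - s) &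
      - (lu i 0 * dxN i 0) + b i * duN i 0 = - (lu i 0 * b i - s)].
Proof.
have hN : Fprime f l u x ll lu *m stack3 dxN dlN duN = - Fmu f l u s x ll lu.
  by rewrite -newton_blocks /newton mulKVmx // (reg_unit reg).
move: hN; rewrite Fprime_mul /Fmu stack3N => /stack3_inj [e1 e2 e3].
have coord (v w : 'cV[R]_n) : v = w -> v i 0 = w i 0 by move=> ->.
move: (coord _ _ e1) (coord _ _ e2) (coord _ _ e3); rewrite !mxE => c1 c2 c3.
by split; rewrite // [(H *m dxN) i 0]mxE.
Qed.

Lemma dlN_eq i : dlN i 0 = (s - ll i 0 * a i - ll i 0 * dxN i 0) / a i.
Proof. by case: (newton_eqs i) => _ e2 _; apply: (canRL (mulfK (a_neq0 i))); lra. Qed.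

Lemma duN_eq i : duN i 0 = (s - lu i 0 * b i + lu i 0 * dxN i 0) / b i.
Proof. by case: (newton_eqs i) => _ _ e3; apply: (canRL (mulfK (b_neq0 i))); lra. Qed.

Lemma newton_reduced i : (H *m dxN) i 0 + D i * dxN i 0 = - g i 0 + s / a i - s / b i.
Proof.
case: (newton_eqs i) => e1 _ _.
have -> : (H *m dxN) i 0 = - (g i 0 - ll i 0 + lu i 0) + dlN i 0 - duN i 0 by lra.
by rewrite dlN_eq duN_eq; field; nonzero.
Qed.

(* On A_x the diagonal coefficient d_i is of order 1/mu: the barrier term of the
   active bound dominates the bounded Hessian entry. *)
Lemma dcoef_lb i : Ax i -> eta / (2 * (Am * mu)) <= dcoef H l u x ll lu i.
Proof.
move=> hA; rewrite /dcoef.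
have hHii : - M <= H i i by have := reg_hess reg i i; rewrite ler_norml => /andP [].
have hlq : 0 <= ll i 0 / a i by rewrite divr_ge0 // ltW.
have huq : 0 <= lu i 0 / b i by rewrite divr_ge0 // ltW.
have barrier : eta / (Am * mu) <= ll i 0 / a i + lu i 0 / b i.
  move: hA; rewrite /inAx; case/orP => hA.
    have := reg_lower reg i; rewrite hA => -[h1 h2].
    by apply: le_trans (ratio_lb eta_gt0 h1 (a_gt0 i) h2) _; rewrite lerDl.
  have := reg_upper reg i; rewrite hA => -[h1 h2].
  by apply: le_trans (ratio_lb eta_gt0 h1 (b_gt0 i) h2) _; rewrite lerDr.
have M_le : M <= eta / (2 * (Am * mu)).
  by rewrite ler_pdivlMr ?mulr_gt0 // mulrC (reg_small reg).2.
have half : eta / (Am * mu) = 2 * (eta / (2 * (Am * mu))) by field; nonzero.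
lra.
Qed.

Lemma dcoef_neq0 i : Ax i -> dcoef H l u x ll lu i != 0.
Proof.
move=> hA; have e0 : 0 < eta / (2 * (Am * mu)) by rewrite divr_gt0 ?mulr_gt0.
by rewrite gt_eqF // (lt_le_trans e0 (dcoef_lb hA)).
Qed.

Definition err_S := 2 * (n%:R + 1) * M * B * Am / eta.
Definition err_C := Am * B / eta.
Definition err_active := err_S + err_C.

Let err_S_ge0 : 0 <= err_S.
Proof. by rewrite /err_S divr_ge0 ?(ltW eta_gt0) // !mulr_ge0 ?addr_ge0 // ltW. Qed.
Let err_C_ge0 : 0 <= err_C.
Proof. by rewrite /err_C divr_ge0 ?(ltW eta_gt0) // mulr_ge0 // ltW. Qed.

(* The approximation Delta x^S: it differs from dxN by the off-diagonal part of
   (H dxN)_i divided by d_i, i.e. O(mu) * O(mu). *)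
Lemma dxS_error i : Ax i -> `|dxS g H l u x ll lu s i - dxN i 0| <= err_S * mu ^+ 2.
Proof.
move=> hA; have dlb := dcoef_lb hA; have d0 := dcoef_neq0 hA.
have e0 : 0 < eta / (2 * (Am * mu)) by rewrite divr_gt0 ?mulr_gt0.
have -> : dxS g H l u x ll lu s i - dxN i 0 =
          ((H *m dxN) i 0 - H i i * dxN i 0) / dcoef H l u x ll lu i.
  apply: (canRL (mulfK d0)); rewrite /= /dxS.
  have -> : (H *m dxN) i 0 = - g i 0 + s / a i - s / b i - D i * dxN i 0.
    by rewrite -(newton_reduced i); ring.
  have d0' : (H i i * a i + ll i 0) * b i + lu i 0 * a i != 0.
    have -> : (H i i * a i + ll i 0) * b i + lu i 0 * a i
              = dcoef H l u x ll lu i * a i * b i by rewrite /dcoef; field; nonzero.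
    by rewrite !mulf_neq0.
  by rewrite /dcoef; field; rewrite d0'; nonzero.
have num : `|(H *m dxN) i 0 - H i i * dxN i 0| <= (n%:R + 1) * M * B * mu.
  apply: le_trans (ler_normB _ _) _.
  have h1 := mulmx_entry_bound dxN i (reg_hess reg).
  have h2 : `|H i i * dxN i 0| <= M * (B * mu).
    by rewrite normrM ler_pM ?normr_ge0 ?(reg_hess reg) ?dxN_bound.
  have h3 : M * \sum_j `|dxN j 0| <= M * (n%:R * (B * mu)).
    by apply: ler_wpM2l => //; apply: sum_le_card => j; exact: dxN_bound.
  have -> : (n%:R + 1) * M * B * mu = M * (n%:R * (B * mu)) + M * (B * mu) by ring.
  lra.
have -> : err_S * mu ^+ 2 = (n%:R + 1) * M * B * mu / (eta / (2 * (Am * mu))).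
  by rewrite /err_S; field; nonzero.
exact: div_bound e0 dlb num.
Qed.

(* The approximation Delta x^C: its error is (distance to the active bound) times
   the Newton multiplier, divided by the multiplier, i.e. O(mu) * O(mu) / eta. *)
Lemma dxC_error i : Ax i -> `|dxC l u xs x ll lu s i - dxN i 0| <= err_C * mu ^+ 2.
Proof.
move=> hAi; rewrite /dxC.
have target : Am * mu * (B * mu) / eta = err_C * mu ^+ 2 by rewrite /err_C; field; nonzero.
case hA : (Al i).
  have := reg_lower reg i; rewrite hA => -[h1 h2].
  have -> : - a i + s / ll i 0 - dxN i 0 = a i * dlN i 0 / ll i 0.
    by rewrite dlN_eq; field; nonzero.
  by rewrite -target div_bound // prod_bound ?dlN_bound // ltW.
have hAu : Au i by move: hAi; rewrite /inAx hA.
have := reg_upper reg i; rewrite hAu => -[h1 h2].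
have -> : b i - s / lu i 0 - dxN i 0 = - (b i * duN i 0) / lu i 0.
  by rewrite duN_eq; field; nonzero.
by rewrite -target mulNr normrN div_bound // prod_bound ?duN_bound // ltW.
Qed.

Lemma active_dx_error cx dx i : is_dx g H l u xs x ll lu s cx dx -> Ax i ->
  `|dx i 0 - dxN i 0| <= err_active * mu ^+ 2.
Proof.
case=> hA _ hi; rewrite hA // /err_active mulrDl.
case: (cx i); [apply: le_trans (dxS_error hi) _ | apply: le_trans (dxC_error hi) _].
  by rewrite lerDl mulr_ge0.
by rewrite lerDr mulr_ge0.
Qed.

Let Al_small i : Al i -> a i <= Am * mu.
Proof. by move=> hA; have := reg_lower reg i; rewrite hA => -[]. Qed.
Let Au_small i : Au i -> b i <= Am * mu.
Proof. by move=> hA; have := reg_upper reg i; rewrite hA => -[]. Qed.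

Let reduced_bound := reduced_system_bound (reg_unit reg) (reg_inv reg) K_ge0
  (reg_hess reg) M_ge0 a_gt0 b_gt0 (ltW Amu_gt0) Al_small Au_small
  (reg_disjoint reg) (reg_small reg).1.
Let reduced_zero := reduced_solution_zero (reg_unit reg) (reg_inv reg) K_ge0
  (reg_hess reg) M_ge0 a_gt0 b_gt0 (ltW Amu_gt0) Al_small Au_small
  (reg_disjoint reg) (reg_small reg).1.
Let reduced_solvable := reduced_system_solvable (reg_unit reg) (reg_inv reg) K_ge0
  (reg_hess reg) M_ge0 a_gt0 b_gt0 (ltW Amu_gt0) Al_small Au_small
  (reg_disjoint reg) (reg_small reg).1.

Definition err_dx := err_active + 2 * n%:R * K * (n%:R * (M * (n%:R * err_active))).

Let err_active_ge0 : 0 <= err_active. Proof. exact: addr_ge0. Qed.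
Let err_dx_ge0 : 0 <= err_dx.
Proof. by rewrite /err_dx addr_ge0 // !mulr_ge0. Qed.

(* The error dx - dxN is O(mu^2) on A_x by active_dx_error; on I_x it solves the
   reduced system with a right-hand side driven by the A_x part of the error. *)
Lemma dx_error cx dx i : is_dx g H l u xs x ll lu s cx dx ->
  `|dx i 0 - dxN i 0| <= err_dx * mu ^+ 2.
Proof.
move=> hdx; have [_ hfull] := (is_dx_reducedP g H l u xs x ll lu s cx dx).1 hdx.
pose y := \col_j (if Ax j then 0 else dx j 0 - dxN j 0); pose z := dx - dxN - y.
have hz j : `|z j 0| <= err_active * mu ^+ 2.
  rewrite !mxB_entry [y j 0]mxE; case: ifP => hj.
    by rewrite subr0; exact: active_dx_error hdx hj.
  by rewrite subrr normr0 mulr_ge0.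
have hy0 j : Ax j -> y j 0 = 0 by rewrite mxE => ->.
have hyI j : ~~ Ax j -> (H *m y) j 0 + D j * y j 0 = - (H *m z) j 0.
  move=> hj; have fe := hfull j hj; have fN := newton_reduced j.
  rewrite /z !mulmxBr !mxB_entry [y j 0]mxE (negPf hj); lra.
have hHz : \sum_j `|- (H *m z) j 0| <= n%:R * (M * (n%:R * (err_active * mu ^+ 2))).
  apply: sum_le_card => j; rewrite normrN.
  apply: le_trans (mulmx_entry_bound z j (reg_hess reg)) _.
  by apply: ler_wpM2l => //; exact: sum_le_card.
have hy : \sum_j `|y j 0| <= (err_dx - err_active) * mu ^+ 2.
  apply: le_trans (reduced_bound hy0 hyI) _.
  have -> : (err_dx - err_active) * mu ^+ 2
    = 2 * n%:R * K * (n%:R * (M * (n%:R * (err_active * mu ^+ 2)))) by rewrite /err_dx; ring.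
  by apply: ler_wpM2l => //; rewrite !mulr_ge0.
have [hi|hi] := boolP (Ax i).
  apply: le_trans (active_dx_error hdx hi) _.
  by rewrite ler_wpM2r // /err_dx lerDl !mulr_ge0.
have -> : dx i 0 - dxN i 0 = y i 0 by rewrite [y i 0]mxE (negPf hi).
apply: le_trans (le_trans (normr_le_sum (fun j => y j 0) i) hy) _.
by rewrite ler_wpM2r // lerBlDr lerDl.
Qed.

Lemma dx_exists_unique cx : exists! dx, is_dx g H l u xs x ll lu s cx dx.
Proof.
have [dx [hA hI]] := reduced_solvable
  (fun i => if cx i then dxS g H l u x ll lu s i else dxC l u xs x ll lu s i)
  (fun i => - g i 0 + s / a i - s / b i).
have hdx : is_dx g H l u xs x ll lu s cx dx by apply/is_dx_reducedP.
exists dx; split => // dx' /is_dx_reducedP [hA' hI'].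
apply/eqP; rewrite -subr_eq0; apply/eqP.
apply: reduced_zero => i hi.
  by rewrite mxB_entry hA // hA' // subrr.
by rewrite mulmxBr !mxB_entry; have := hI i hi; have := hI' i hi; lra.
Qed.

Definition err_mult :=
  M * n%:R * err_dx + Am / eta * err_dx + (1 + C1) * err_dx + Am * B / eta.

Let err_mult_parts : [/\ 0 <= M * n%:R * err_dx, 0 <= Am / eta * err_dx,
  0 <= (1 + C1) * err_dx & 0 <= Am * B / eta].
Proof.
have Ae : 0 <= Am / eta by rewrite divr_ge0 // ltW.
have C0 : 0 <= 1 + C1 by rewrite addr_ge0 // ltW.
have B0 : 0 <= Am * B / eta by rewrite divr_ge0 ?mulr_ge0 // ltW.
by split=> //; rewrite mulr_ge0 // mulr_ge0.
Qed.

Let small_ratio (p q P : R) : eta <= q -> `|p| <= Am * mu * P -> 0 <= P ->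
  `|p / q| <= Am / eta * P.
Proof.
move=> hq hp P0; apply: le_trans (div_bound eta_gt0 hq hp) _.
have -> : Am * mu * P / eta = mu * (Am / eta * P) by field; nonzero.
by rewrite ler_piMl // mulr_ge0 // divr_ge0 // ltW.
Qed.

Lemma hess_dx_error cx dx i : is_dx g H l u xs x ll lu s cx dx ->
  `|\sum_j H i j * dx j 0 - \sum_j H i j * dxN j 0| <= M * n%:R * err_dx * mu ^+ 2.
Proof.
move=> hdx.
have -> : \sum_j H i j * dx j 0 - \sum_j H i j * dxN j 0 = (H *m (dx - dxN)) i 0.
  by rewrite mulmxBr mxB_entry !mxE.
apply: le_trans (mulmx_entry_bound _ i (reg_hess reg)) _.
rewrite -!mulrA; apply: ler_wpM2l => //; apply: sum_le_card => j.
by rewrite mxB_entry; exact: dx_error hdx.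
Qed.

(* On I_l the least-squares multiplier inherits the error of dx, damped by
   ll_i / a_i = O(mu). *)
Lemma dllI_error cx dx i : is_dx g H l u xs x ll lu s cx dx -> ~~ Al i ->
  `|dllI l x ll s dx i - dlN i 0| <= Am / eta * err_dx * mu ^+ 2.
Proof.
move=> hdx hi; have := reg_lower reg i; rewrite (negPf hi) => -[h1 h2].
have -> : dllI l x ll s dx i - dlN i 0 = - (ll i 0 * (dx i 0 - dxN i 0)) / a i.
  by rewrite /dllI dlN_eq; field; nonzero.
rewrite mulNr normrN -[Am / eta * _ * _]mulrA small_ratio ?(mulr_ge0 err_dx_ge0 mu2_ge0) //.
by rewrite prod_bound ?(dx_error _ hdx) // ltW.
Qed.

(* The complementarity choice on I_l is O(mu) * O(mu) / eta away from dlN_i. *)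
Lemma dllC_error i : ~~ Al i -> `|dllC l x ll s i - dlN i 0| <= Am * B / eta * mu ^+ 2.
Proof.
move=> hi; have := reg_lower reg i; rewrite (negPf hi) => -[h1 h2].
have -> : dllC l x ll s i - dlN i 0 = ll i 0 * dxN i 0 / a i.
  by rewrite /dllC dlN_eq; field; nonzero.
have -> : Am * B / eta * mu ^+ 2 = Am * mu * (B * mu) / eta by field; nonzero.
by rewrite div_bound // prod_bound ?dxN_bound // ltW.
Qed.

Lemma rres_lower_error cx dx i : is_dx g H l u xs x ll lu s cx dx -> Al i ->
  `|rres g H l u xs x ll lu s dx i - dlN i 0|
    <= (M * n%:R * err_dx + Am / eta * err_dx) * mu ^+ 2.
Proof.
move=> hdx hA; have hAu := reg_disjoint reg hA.
have := reg_upper reg i; rewrite (negPf hAu) => -[h1 h2].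
rewrite /rres hA (negPf hAu) /= subr0.
have -> : g i 0 - ll i 0 + lu i 0 + \sum_j H i j * dx j 0 + dluI u x lu s dx i - dlN i 0
       = (\sum_j H i j * dx j 0 - \sum_j H i j * dxN j 0)
         + lu i 0 * (dx i 0 - dxN i 0) / b i.
  case: (newton_eqs i) => e1 _ _.
  have -> : dlN i 0 = (H *m dxN) i 0 + duN i 0 + (g i 0 - ll i 0 + lu i 0) by lra.
  by rewrite duN_eq /dluI [(H *m dxN) i 0]mxE; field; nonzero.
rewrite mulrDl; apply: le_trans (ler_normD _ _) _; apply: lerD.
  exact: hess_dx_error hdx.
rewrite -[Am / eta * _ * _]mulrA small_ratio ?(mulr_ge0 err_dx_ge0 mu2_ge0) //.
by rewrite prod_bound ?(dx_error _ hdx) // ltW.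
Qed.

(* The least-squares choice on A_l combines r_i with the centred product
   a_i ll_i = O(mu). *)
Lemma dllA_error cx dx i : is_dx g H l u xs x ll lu s cx dx -> Al i ->
  `|dllA g H l u xs x ll lu s dx i - dlN i 0|
    <= (M * n%:R * err_dx + Am / eta * err_dx + (1 + C1) * err_dx) * mu ^+ 2.
Proof.
move=> hdx hA; rewrite /dllA; set r := rres g H l u xs x ll lu s dx i.
have q1 : 1 <= 1 + a i ^+ 2 by rewrite lerDl sqr_ge0.
have q0 : 1 + a i ^+ 2 != 0 by rewrite gt_eqF // (lt_le_trans ltr01 q1).
have -> : (r - a i * (ll i 0 * a i - s + ll i 0 * dx i 0)) / (1 + a i ^+ 2) - dlN i 0
       = (r - dlN i 0 - a i * ll i 0 * (dx i 0 - dxN i 0)) / (1 + a i ^+ 2).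
  by rewrite dlN_eq; field; rewrite q0; nonzero.
have centred : `|a i * ll i 0 * (dx i 0 - dxN i 0)| <= (1 + C1) * err_dx * mu ^+ 2.
  apply: le_trans (_ : _ <= (1 + C1) * mu * (err_dx * mu ^+ 2)) _.
    apply: prod_bound; last exact: dx_error hdx.
      by rewrite mulr_ge0 // ltW.
    by rewrite mulrC (reg_centred reg i).1.
  rewrite -mulrA mulrCA -[X in _ <= X]mulrA ler_piMl //.
  by rewrite mulr_ge0 ?(mulr_ge0 err_dx_ge0 mu2_ge0) // addr_ge0 // ltW.
have hnum := le_trans (ler_normB _ _) (lerD (rres_lower_error hdx hA) centred).
by apply: le_trans (div_bound ltr01 q1 hnum) _; rewrite divr1 -mulrDl.
Qed.

Lemma dll_error cl cx dx i : is_dx g H l u xs x ll lu s cx dx ->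
  `|dll g H l u xs x ll lu s cl dx i 0 - dlN i 0| <= err_mult * mu ^+ 2.
Proof.
move=> hdx; have [P1 P2 P3 P4] := err_mult_parts.
rewrite mxE; case hA : (Al i); case: (cl i).
- apply: le_trans (dllA_error hdx hA) _; rewrite ler_wpM2r // /err_mult; lra.
- apply: le_trans (rres_lower_error hdx hA) _; rewrite ler_wpM2r // /err_mult; lra.
- apply: le_trans (dllI_error hdx (negbT hA)) _; rewrite ler_wpM2r // /err_mult; lra.
- apply: le_trans (dllC_error (negbT hA)) _; rewrite ler_wpM2r // /err_mult; lra.
Qed.

Lemma dluI_error cx dx i : is_dx g H l u xs x ll lu s cx dx -> ~~ Au i ->
  `|dluI u x lu s dx i - duN i 0| <= Am / eta * err_dx * mu ^+ 2.
Proof.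
move=> hdx hi; have := reg_upper reg i; rewrite (negPf hi) => -[h1 h2].
have -> : dluI u x lu s dx i - duN i 0 = lu i 0 * (dx i 0 - dxN i 0) / b i.
  by rewrite /dluI duN_eq; field; nonzero.
rewrite -[Am / eta * _ * _]mulrA small_ratio ?(mulr_ge0 err_dx_ge0 mu2_ge0) //.
by rewrite prod_bound ?(dx_error _ hdx) // ltW.
Qed.

Lemma dluC_error i : ~~ Au i -> `|dluC u x lu s i - duN i 0| <= Am * B / eta * mu ^+ 2.
Proof.
move=> hi; have := reg_upper reg i; rewrite (negPf hi) => -[h1 h2].
have -> : dluC u x lu s i - duN i 0 = - (lu i 0 * dxN i 0) / b i.
  by rewrite /dluC duN_eq; field; nonzero.
have -> : Am * B / eta * mu ^+ 2 = Am * mu * (B * mu) / eta by field; nonzero.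
by rewrite mulNr normrN div_bound // prod_bound ?dxN_bound // ltW.
Qed.

Lemma rres_upper_error cx dx i : is_dx g H l u xs x ll lu s cx dx -> Au i ->
  `|- rres g H l u xs x ll lu s dx i - duN i 0|
    <= (M * n%:R * err_dx + Am / eta * err_dx) * mu ^+ 2.
Proof.
move=> hdx hA; have hAl : ~~ Al i by apply/negP => /(reg_disjoint reg); rewrite hA.
have := reg_lower reg i; rewrite (negPf hAl) => -[h1 h2].
rewrite /rres hAl hA /= addr0.
have -> : - (g i 0 - ll i 0 + lu i 0 + \sum_j H i j * dx j 0 - dllI l x ll s dx i) - duN i 0
       = - (\sum_j H i j * dx j 0 - \sum_j H i j * dxN j 0)
         - ll i 0 * (dx i 0 - dxN i 0) / a i.
  case: (newton_eqs i) => e1 _ _.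
  have -> : duN i 0 = - (H *m dxN) i 0 + dlN i 0 - (g i 0 - ll i 0 + lu i 0) by lra.
  by rewrite dlN_eq /dllI [(H *m dxN) i 0]mxE; field; nonzero.
rewrite mulrDl; apply: le_trans (ler_normB _ _) _; apply: lerD.
  by rewrite normrN; exact: hess_dx_error hdx.
rewrite -[Am / eta * _ * _]mulrA small_ratio ?(mulr_ge0 err_dx_ge0 mu2_ge0) //.
by rewrite prod_bound ?(dx_error _ hdx) // ltW.
Qed.

Lemma dluA_error cx dx i : is_dx g H l u xs x ll lu s cx dx -> Au i ->
  `|dluA g H l u xs x ll lu s dx i - duN i 0|
    <= (M * n%:R * err_dx + Am / eta * err_dx + (1 + C1) * err_dx) * mu ^+ 2.
Proof.
move=> hdx hA; rewrite /dluA; set r := rres g H l u xs x ll lu s dx i.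
have q1 : 1 <= 1 + b i ^+ 2 by rewrite lerDl sqr_ge0.
have q0 : 1 + b i ^+ 2 != 0 by rewrite gt_eqF // (lt_le_trans ltr01 q1).
have -> : - ((r + b i * (lu i 0 * b i - s - lu i 0 * dx i 0)) / (1 + b i ^+ 2)) - duN i 0
       = (- r - duN i 0 + b i * lu i 0 * (dx i 0 - dxN i 0)) / (1 + b i ^+ 2).
  by rewrite duN_eq; field; rewrite q0; nonzero.
have centred : `|b i * lu i 0 * (dx i 0 - dxN i 0)| <= (1 + C1) * err_dx * mu ^+ 2.
  apply: le_trans (_ : _ <= (1 + C1) * mu * (err_dx * mu ^+ 2)) _.
    apply: prod_bound; last exact: dx_error hdx.
      by rewrite mulr_ge0 // ltW.
    by rewrite mulrC (reg_centred reg i).2.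
  rewrite -mulrA mulrCA -[X in _ <= X]mulrA ler_piMl //.
  by rewrite mulr_ge0 ?(mulr_ge0 err_dx_ge0 mu2_ge0) // addr_ge0 // ltW.
have hnum := le_trans (ler_normD _ _) (lerD (rres_upper_error hdx hA) centred).
by apply: le_trans (div_bound ltr01 q1 hnum) _; rewrite divr1 -mulrDl.
Qed.

Lemma dlu_error cu cx dx i : is_dx g H l u xs x ll lu s cx dx ->
  `|dlu g H l u xs x ll lu s cu dx i 0 - duN i 0| <= err_mult * mu ^+ 2.
Proof.
move=> hdx; have [P1 P2 P3 P4] := err_mult_parts.
rewrite mxE; case hA : (Au i); case: (cu i).
- apply: le_trans (dluA_error hdx hA) _; rewrite ler_wpM2r // /err_mult; lra.
- apply: le_trans (rres_upper_error hdx hA) _; rewrite ler_wpM2r // /err_mult; lra.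
- apply: le_trans (dluI_error hdx (negbT hA)) _; rewrite ler_wpM2r // /err_mult; lra.
- apply: le_trans (dluC_error (negbT hA)) _; rewrite ler_wpM2r // /err_mult; lra.
Qed.

Definition err_total := n%:R * err_dx + n%:R * err_mult + n%:R * err_mult.

Lemma err_total_ge0 : 0 <= err_total.
Proof.
have [P1 P2 P3 P4] := err_mult_parts.
by rewrite /err_total /err_mult !addr_ge0 ?mulr_ge0 // !addr_ge0.
Qed.

Lemma direction_estimate (cx cl cu : 'I_n -> bool) :
  (forall i, Ax i -> cx i -> dcoef H l u x ll lu i != 0) /\
  (exists! dx, is_dx g H l u xs x ll lu s cx dx) /\
  (forall dx, is_dx g H l u xs x ll lu s cx dx ->
     enorm (stack3 dx (dll g H l u xs x ll lu s cl dx) (dlu g H l u xs x ll lu s cu dx) - N)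
       <= err_total * mu ^+ 2).
Proof.
split; first by move=> i hi _; exact: dcoef_neq0.
split; first exact: dx_exists_unique.
move=> dx hdx; rewrite newton_blocks stack3B.
apply: le_trans (enorm_stack3_le _ _ _) _.
rewrite /err_total !mulrDl -!mulrA; apply: lerD; first apply: lerD.
- by apply: sum_le_card => i; rewrite mxB_entry; exact: dx_error hdx.
- by apply: sum_le_card => i; rewrite mxB_entry; exact: dll_error hdx.
- by apply: sum_le_card => i; rewrite mxB_entry; exact: dlu_error hdx.
Qed.
End NewtonComparison.

Section LocalBounds.
Variable R : realType.

Lemma hessf_bounded_near n (f : 'cV[R]_n -> R) (xs : 'cV[R]_n) : C2_loclipHess f ->
  exists r M, 0 < r /\ 0 <= M /\
    forall y, enorm (y - xs) < r -> forall i j, `|hessf f y i j| <= M.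
Proof.
case=> _ [_ /(_ xs) [r [r0 [L hL]]]].
pose S := \sum_i \sum_j `|hessf f xs i j|.
have S0 : 0 <= S by apply: sumr_ge0 => i _; exact: sumr_ge0.
exists r, (S + `|L| * r); split => //; split; first by rewrite addr_ge0 ?mulr_ge0 // ltW.
move=> y hy i j.
have hxs : enorm (xs - xs) < r by rewrite subrr /enorm big1 ?sqrtr0 // => k _; rewrite mxE expr0n.
have lip : `|hessf f y i j - hessf f xs i j| <= `|L| * r.
  rewrite -mxB_entry; apply: le_trans (entry_le_frob _ i j) _.
  apply: le_trans (hL y xs hy hxs) _; apply: le_trans (ler_norm _) _.
  by rewrite normrM (ger0_norm (enorm_ge0 _)) ler_wpM2l // ltW.
have entry : `|hessf f xs i j| <= S.
  apply: le_trans (normr_le_sum (fun k => hessf f xs i k) j) _.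
  by rewrite /S [X in _ <= X](bigD1 i) //= lerDl sumr_ge0 // => k _; exact: sumr_ge0.
rewrite -(subrK (hessf f xs i j) (hessf f y i j)).
by apply: le_trans (ler_normD _ _) _; rewrite addrC lerD.
Qed.

Lemma uniform_lb n (F : 'I_n -> R) : (forall i, 0 < F i) ->
  exists e, 0 < e /\ forall i, e <= F i.
Proof.
move=> hF; have S0 : 0 <= \sum_i (F i)^-1 by apply: sumr_ge0 => i _; rewrite invr_ge0 ltW.
have p0 : 0 < 1 + \sum_i (F i)^-1 by rewrite ltr_pwDl.
exists (1 + \sum_i (F i)^-1)^-1; split; first by rewrite invr_gt0.
move=> i; rewrite -[F i]invrK lef_pV2 ?posrE ?invr_gt0 //.
apply: le_trans (_ : \sum_j (F j)^-1 <= _); last by rewrite lerDr.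
rewrite (bigD1 i) //= lerDl; apply: sumr_ge0 => j _; by rewrite invr_ge0 ltW.
Qed.

Lemma stack3_close n (a b c a' b' c' a'' b'' c'' : 'cV[R]_n) (r1 r2 : R) i :
  enorm (stack3 a b c - stack3 a' b' c') < r1 ->
  enorm (stack3 a' b' c' - stack3 a'' b'' c'') <= r2 ->
  [/\ `|a i 0 - a'' i 0| < r1 + r2, `|b i 0 - b'' i 0| < r1 + r2 &
      `|c i 0 - c'' i 0| < r1 + r2].
Proof.
rewrite !stack3B => h1 h2.
have tri (p q r : R) : `|p - q| < r1 -> `|q - r| <= r2 -> `|p - r| < r1 + r2.
  move=> hpq hqr; have := ler_normD (p - q) (q - r).
  rewrite (_ : p - q + (q - r) = p - r); [lra | ring].
case: (stack3_coord_le (a - a') (b - b') (c - c') i); rewrite !mxB_entry => u1 u2 u3.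
case: (stack3_coord_le (a' - a'') (b' - b'') (c' - c'') i); rewrite !mxB_entry => v1 v2 v3.
split; apply: tri.
- exact: le_lt_trans u1 h1.
- exact: le_trans v1 h2.
- exact: le_lt_trans u2 h1.
- exact: le_trans v2 h2.
- exact: le_lt_trans u3 h1.
- exact: le_trans v3 h2.
Qed.

Lemma complementarity_scales (a lam a_s lam_s eta e c : R) :
  0 < a -> 0 < lam -> 0 < eta -> e <= eta -> 2 * eta <= a_s + lam_s ->
  a_s * lam_s = 0 -> `|a - a_s| < e -> `|lam - lam_s| < e -> lam * a <= c ->
  (a_s = 0 -> eta <= lam /\ a <= c / eta) /\ (a_s != 0 -> eta <= a /\ lam <= c / eta).
Proof.
move=> a0 l0 e0 ee hs hc ha hl hp.
move: ha hl; rewrite !ltr_norml => /andP [ha1 ha2] /andP [hl1 hl2].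
have small (p q : R) : 0 < p -> eta <= q -> q * p <= c -> p <= c / eta.
  move=> p0 hq hqp; rewrite ler_pdivlMr //.
  by apply: le_trans hqp; rewrite mulrC ler_wpM2r // ltW.
split => has.
  have hle : eta <= lam by move: has hs hl1 ee; clear; lra.
  by split => //; exact: small a0 hle hp.
have ls0 : lam_s = 0 by move/eqP: hc; rewrite mulf_eq0 (negPf has) /= => /eqP.
have hae : eta <= a by move: ls0 hs ha1 ee; clear; lra.
by split => //; apply: small l0 hae _; rewrite mulrC.
Qed.

Lemma Fmu_bounds n (f : 'cV[R]_n -> R) (l u x ll lu : 'cV[R]_n) (mu sigma C1 : R) :
  0 < mu -> 0 <= sigma <= 1 -> enorm (Fmu f l u mu x ll lu) <= C1 * mu ->
  (forall i, ll i 0 * (x i 0 - l i 0) <= (1 + C1) * mu /\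
             lu i 0 * (u i 0 - x i 0) <= (1 + C1) * mu) /\
  enorm (Fmu f l u (sigma * mu) x ll lu) <= 3 * n%:R * (C1 + 1) * mu.
Proof.
move=> mu0 /andP [s0 s1] hF.
have hcoord i := stack3_coord_le (gradf f x - ll + lu)
  (\col_i (ll i 0 * (x i 0 - l i 0) - mu)) (\col_i (lu i 0 * (u i 0 - x i 0) - mu)) i.
have hshift (p : R) : `|p - mu| <= C1 * mu -> `|p - sigma * mu| <= (C1 + 1) * mu.
  have hs : `|mu - sigma * mu| <= mu.
    have sm0 : 0 <= sigma * mu by rewrite mulr_ge0 // ltW.
    have sm1 : sigma * mu <= mu by rewrite ler_piMl // ltW.
    rewrite ger0_norm; lra.
  move=> hp; rewrite (_ : p - sigma * mu = (p - mu) + (mu - sigma * mu)); last by ring.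
  by apply: le_trans (ler_normD _ _) _; rewrite mulrDl mul1r lerD.
split=> [i|].
  case: (hcoord i); rewrite !mxE => _ h2 h3.
  have := le_trans (ler_norm _) (le_trans h2 hF).
  have := le_trans (ler_norm _) (le_trans h3 hF); lra.
rewrite /Fmu; apply: le_trans (enorm_stack3_le _ _ _) _.
rewrite (_ : 3 * n%:R * (C1 + 1) * mu = n%:R * ((C1 + 1) * mu) + n%:R * ((C1 + 1) * mu)
             + n%:R * ((C1 + 1) * mu)); last by ring.
have C1mu : C1 * mu <= (C1 + 1) * mu by rewrite mulrDl mul1r lerDl ltW.
apply: lerD; first apply: lerD; apply: sum_le_card => i; case: (hcoord i) => h1 h2 h3.
- exact: le_trans h1 (le_trans hF C1mu).
- by rewrite mxE; apply: hshift; move: (le_trans h2 hF); rewrite mxE.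
- by rewrite mxE; apply: hshift; move: (le_trans h3 hF); rewrite mxE.
Qed.

End LocalBounds.

Section ParameterChoice.
Variable R : realType.

Lemma complementarity_margin n (p q : 'I_n -> R) :
  (forall i, 0 < p i) -> (forall i, 0 < q i) ->
  exists eta, 0 < eta /\ forall i, 2 * eta <= p i /\ 2 * eta <= q i.
Proof.
move=> hp hq; have hpq i : 0 < Num.min (p i) (q i) by rewrite lt_min hp hq.
have [e [e0 he]] := uniform_lb hpq.
exists (e / 2); split; first by rewrite divr_gt0.
by move=> i; have := he i; rewrite le_min => /andP [h1 h2]; rewrite mulrC divfK.
Qed.

Lemma radius_choice n (eta r : R) : 0 < eta -> 0 < r ->
  exists e, 0 < e /\ e <= eta /\ n%:R * e < r.
Proof.
move=> eta_gt0 r_gt0; have n1_gt0 : 0 < n%:R + 1 :> R by rewrite ltr_wpDl.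
exists (Num.min eta (r / (n%:R + 1))).
split; first by rewrite lt_min eta_gt0 divr_gt0.
split; first by rewrite ge_min lexx.
apply: le_lt_trans (_ : n%:R * (r / (n%:R + 1)) < r).
  by rewrite ler_wpM2l // ge_min lexx orbT.
by rewrite mulrCA gtr_pMr // ltr_pdivrMr // mul1r ltrDl.
Qed.

Lemma small_parameter (m0 : R) (cs : seq (R * R)) : 0 < m0 -> all (fun p => 0 < p.2) cs ->
  exists m, 0 < m <= m0 /\ forall mu, 0 < mu <= m -> all (fun p => p.1 * mu <= p.2) cs.
Proof.
move=> m0_gt0; elim: cs => [|[c d] cs IH] /=; first by exists m0; rewrite m0_gt0 lexx.
case/andP=> d_gt0 /IH [m [/andP [m_gt0 m_le] hm]].
have c1 : 0 < `|c| + 1 by rewrite ltr_wpDl.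
exists (Num.min m (d / (`|c| + 1))); split.
  by rewrite lt_min m_gt0 divr_gt0 //= ge_min m_le.
move=> mu /andP [mu_gt0]; rewrite le_min => /andP [mu_m mu_d].
rewrite hm ?mu_gt0 ?mu_m // andbT.
apply: le_trans (_ : `|c| * mu <= d); first by rewrite ler_wpM2r ?ler_norm // ltW.
apply: le_trans (_ : `|c| * (d / (`|c| + 1)) <= d); first by rewrite ler_wpM2l.
by rewrite mulrCA ger_pMr // ler_pdivrMr // mul1r lerDl.
Qed.

End ParameterChoice.

Section NearTrajectory.
Variables (R : realType) (n : nat) (f : 'cV[R]_n -> R) (l u xs lls lus : 'cV[R]_n).
Variables (eta r M delta K0 : R).
Hypothesis l_lt_u : forall i, l i 0 < u i 0.
Hypothesis compl_l : forall i, (xs i 0 - l i 0) * lls i 0 = 0.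
Hypothesis compl_u : forall i, (u i 0 - xs i 0) * lus i 0 = 0.
Hypothesis margin : forall i,
  2 * eta <= (xs i 0 - l i 0) + lls i 0 /\ 2 * eta <= (u i 0 - xs i 0) + lus i 0.
Hypothesis eta_gt0 : 0 < eta.
Hypothesis hess_near : forall y, enorm (y - xs) < r -> forall i j, `|hessf f y i j| <= M.
Hypothesis inv_near : forall x ll lu, enorm (stack3 x ll lu - stack3 xs lls lus) < delta ->
  Fprime f l u x ll lu \in unitmx /\
  forall v, enorm (invmx (Fprime f l u x ll lu) *m v) <= K0 * enorm v.

Lemma near_trajectory_regime (C1 e rho mu sigma : R) (xm lm um x ll lu : 'cV[R]_n) :
  e <= eta -> n%:R * e < r -> rho + rho <= e ->
  enorm (stack3 x ll lu - stack3 xs lls lus) < delta ->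
  enorm (stack3 x ll lu - stack3 xm lm um) < rho ->
  enorm (stack3 xm lm um - stack3 xs lls lus) <= rho ->
  (forall i, l i 0 < x i 0 < u i 0) -> (forall i, 0 < ll i 0) -> (forall i, 0 < lu i 0) ->
  enorm (Fmu f l u mu x ll lu) <= C1 * mu -> 0 < mu <= 1 -> 0 <= sigma <= 1 ->
  4 * n%:R ^+ 2 * (`|K0| + 1) * M * ((1 + C1) / eta) * mu <= 1 ->
  2 * ((1 + C1) / eta) * M * mu <= eta ->
  local_regime f l u xs x ll lu (`|K0| + 1) M eta ((1 + C1) / eta) C1 mu /\
  enorm (newton f l u (sigma * mu) x ll lu) <= (`|K0| + 1) * (3 * n%:R * (C1 + 1)) * mu.
Proof.
move=> e_eta ne_r rho_e hball hnear htraj hx hll hlu hF /andP [mu0 mu1] hsigma small1 small2.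
have [hunit hinv0] := inv_near hball.
have hinv v : enorm (invmx (Fprime f l u x ll lu) *m v) <= (`|K0| + 1) * enorm v.
  by apply: le_trans (hinv0 v) _; rewrite ler_wpM2r ?enorm_ge0 // (le_trans (ler_norm K0)) ?lerDl.
have [centred hFs] := Fmu_bounds mu0 hsigma hF.
have dist i : [/\ `|x i 0 - xs i 0| < e, `|ll i 0 - lls i 0| < e & `|lu i 0 - lus i 0| < e].
  by case: (stack3_close i hnear htraj) => d1 d2 d3; split; apply: lt_le_trans rho_e.
have ha i : 0 < x i 0 - l i 0 by case/andP: (hx i) => h _; rewrite subr_gt0.
have hb i : 0 < u i 0 - x i 0 by case/andP: (hx i) => _ h; rewrite subr_gt0.
have Am_mu : (1 + C1) * mu / eta = (1 + C1) / eta * mu by rewrite mulrAC.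
have dist_ll i : `|ll i 0 - lls i 0| < e by case: (dist i).
have dist_lu i : `|lu i 0 - lus i 0| < e by case: (dist i).
have dist_a i : `|(x i 0 - l i 0) - (xs i 0 - l i 0)| < e.
  by rewrite (_ : _ - _ = x i 0 - xs i 0); [case: (dist i) | ring].
have dist_b i : `|(u i 0 - x i 0) - (u i 0 - xs i 0)| < e.
  by rewrite (_ : _ - _ = - (x i 0 - xs i 0)) ?normrN; [case: (dist i) | ring].
have lower i := complementarity_scales (ha i) (hll i) eta_gt0 e_eta (margin i).1
  (compl_l i) (dist_a i) (dist_ll i) (centred i).1.
have upper i := complementarity_scales (hb i) (hlu i) eta_gt0 e_eta (margin i).2
  (compl_u i) (dist_b i) (dist_lu i) (centred i).2.
split; last first.
  rewrite /newton -mulrA; apply: le_trans (hinv _) _.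
  by rewrite enormN ler_wpM2l // addr_ge0.
split=> //.
- apply: hess_near; apply: le_lt_trans (enorm_le_sum _) (le_lt_trans _ ne_r).
  by apply: sum_le_card => i; rewrite mxB_entry ltW //; case: (dist i).
- move=> i; rewrite -Am_mu /inAl; case: eqP => hA.
    by apply: (lower i).1; rewrite hA subrr.
  by apply: (lower i).2; rewrite subr_eq0; apply/eqP.
- move=> i; rewrite -Am_mu /inAu; case: eqP => hA.
    by apply: (upper i).1; rewrite hA subrr.
  by apply: (upper i).2; rewrite subr_eq0 eq_sym; apply/eqP.
- by move=> i; rewrite /inAl /inAu => /eqP ->; rewrite neq_lt l_lt_u.
- by rewrite mu0.
- by rewrite mulrA small1 /= (le_trans _ small2) // le_eqVlt; apply/orP; left; apply/eqP; ring.
Qed.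

End NearTrajectory.


Unset Implicit Arguments.

Theorem mainTheorem11 (R : realType) (n : nat) (f : 'cV[R]_n -> R)
  (l u xs lls lus : 'cV[R]_n) (delta muhat C4 : R)
  (xmu llmu lumu : R -> 'cV[R]_n) (sigma C1 : R) :
  C2_loclipHess f ->
  (forall i, l i 0 < u i 0) ->
  (* KKT conditions and strict complementarity at (xs, lambda_s) *)
  gradf f xs - lls + lus = 0 ->
  (forall i, l i 0 <= xs i 0 <= u i 0) ->
  (forall i, 0 <= lls i 0) -> (forall i, 0 <= lus i 0) ->
  (forall i, (xs i 0 - l i 0) * lls i 0 = 0) ->
  (forall i, (u i 0 - xs i 0) * lus i 0 = 0) ->
  (forall i, 0 < (xs i 0 - l i 0) + lls i 0) ->
  (forall i, 0 < (u i 0 - xs i 0) + lus i 0) ->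
  (* [Hess f(xs)]_{I_x I_x} positive definite *)
  (forall v : 'cV[R]_n, v != 0 -> (forall i, inAx xs l u i -> v i 0 = 0) ->
     0 < (v^T *m hessf f xs *m v) 0 0) ->
  (* F' nonsingular and boundedly invertible on the ball of radius delta around (xs, lls, lus) *)
  0 < delta ->
  (exists K, forall x ll lu,
     enorm (stack3 x ll lu - stack3 xs lls lus) < delta ->
     Fprime f l u x ll lu \in unitmx /\
     forall v, enorm (invmx (Fprime f l u x ll lu) *m v) <= K * enorm v) ->
  (* Lipschitz barrier trajectory *)
  0 < muhat ->
  (exists L, forall m1 m2, 0 < m1 <= muhat -> 0 < m2 <= muhat ->
     enorm (stack3 (xmu m1) (llmu m1) (lumu m1) - stack3 (xmu m2) (llmu m2) (lumu m2))
       <= L * `|m1 - m2|) ->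
  (forall mu, 0 < mu <= muhat ->
     enorm (stack3 (xmu mu) (llmu mu) (lumu mu) - stack3 xs lls lus) < delta /\
     Fmu f l u mu (xmu mu) (llmu mu) (lumu mu) = 0 /\
     enorm (stack3 (xmu mu) (llmu mu) (lumu mu) - stack3 xs lls lus) <= C4 * mu) ->
  0 < sigma < 1 -> 0 < C1 ->
  exists rho mubar C : R, 0 < rho /\ 0 < mubar <= muhat /\ 0 < C /\
  forall (mu : R) (x ll lu : 'cV[R]_n),
    0 < mu <= mubar ->
    enorm (stack3 x ll lu - stack3 xs lls lus) < delta ->
    (forall i, l i 0 < x i 0 < u i 0) ->
    (forall i, 0 < ll i 0) -> (forall i, 0 < lu i 0) ->
    enorm (stack3 x ll lu - stack3 (xmu mu) (llmu mu) (lumu mu)) < rho ->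
    enorm (Fmu f l u mu x ll lu) <= C1 * mu ->
    forall cx cl cu : 'I_n -> bool,
      (* well-definedness: Delta x^S is defined where chosen, and the linear system
         of step (ii) has a unique solution *)
      (forall i, inAx xs l u i -> cx i ->
         dcoef (hessf f x) l u x ll lu i != 0) /\
      (exists! dx : 'cV[R]_n,
         is_dx (gradf f x) (hessf f x) l u xs x ll lu (sigma * mu) cx dx) /\
      (* the estimate *)
      (forall dx : 'cV[R]_n,
         is_dx (gradf f x) (hessf f x) l u xs x ll lu (sigma * mu) cx dx ->
         enorm (stack3 dx
                  (dll (gradf f x) (hessf f x) l u xs x ll lu (sigma * mu) cl dx)
                  (dlu (gradf f x) (hessf f x) l u xs x ll lu (sigma * mu) cu dx)
                - newton f l u (sigma * mu) x ll lu) <= C * mu ^+ 2).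
Proof.
move=> hC2 l_lt_u _ _ _ _ compl_l compl_u strict_l strict_u _ _ [K0 hK0] muhat_gt0 _
  htraj sigma01 C1_gt0.
have [r [M [r_gt0 [M_ge0 hess_near]]]] := hessf_bounded_near xs hC2.
have [eta [eta_gt0 margin]] := complementarity_margin strict_l strict_u.
have [e [e_gt0 [e_le ne_r]]] := radius_choice n eta_gt0 r_gt0.
pose K := `|K0| + 1; pose Am := (1 + C1) / eta; pose B := K * (3 * n%:R * (C1 + 1)).
have K_ge0 : 0 <= K by rewrite addr_ge0.
have Am_gt0 : 0 < Am by rewrite divr_gt0 // addr_gt0.
have B_ge0 : 0 <= B by rewrite !mulr_ge0 // addr_ge0 // ltW.
have C_ge0 := @err_total_ge0 R n K M eta Am C1 B K_ge0 M_ge0 eta_gt0 Am_gt0 C1_gt0 B_ge0.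
pose conditions := [:: (1, 1); (C4, e / 2); (4 * n%:R ^+ 2 * K * M * Am, 1); (2 * Am * M, eta)].
have conditions_pos : all (fun p => 0 < p.2) conditions by rewrite /= ltr01 divr_gt0 // eta_gt0.
have [mubar [mubar_pos small]] := small_parameter muhat_gt0 conditions_pos.
exists (e / 2), mubar, (err_total n K M eta Am C1 B + 1).
split; first by rewrite divr_gt0.
split=> //; split=> [|mu x ll lu hmu hball hx hll hlu hnear hF cx cl cu].
  exact: ltr_wpDl C_ge0 ltr01.
have /and5P [mu1 hC4 hsmall1 hsmall2 _] := small mu hmu.
have [mu_gt0 mu_le] := andP hmu.
have [_ [_ htraj_mu]] := htraj mu (introT andP (conj mu_gt0 (le_trans mu_le (andP mubar_pos).2))).
have half_e : e / 2 + e / 2 <= e by rewrite -splitr.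
have mu01 : 0 < mu <= 1 by rewrite mu_gt0 -(mul1r mu).
have sigma01' : 0 <= sigma <= 1 by case/andP: sigma01 => s0 s1; rewrite !ltW.
have [reg hN] := near_trajectory_regime l_lt_u compl_l compl_u margin eta_gt0 hess_near hK0
  e_le ne_r half_e hball hnear (le_trans htraj_mu hC4) hx hll hlu hF mu01 sigma01' hsmall1 hsmall2.
have [hdcoef [hex hest]] :=
  direction_estimate reg K_ge0 M_ge0 eta_gt0 Am_gt0 C1_gt0 B_ge0 hN cx cl cu.
split=> //; split=> // dx hdx; apply: le_trans (hest dx hdx) _.
by rewrite ler_wpM2r ?sqr_ge0 // lerDl.
Qed.
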